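(* For any fixed $m$, any fixed $k<m$ and any fixed $\vec p\in(0,1)^m$, $$\Pr_{P\sim(\pi_{\vec p})^n}\big(\mathrm{top}_k(\vec p)\subseteq\mathrm{EJR{+}}(P)\big)=1-\exp(-\Omega(n)).$$
   Context: $\mathcal A=[m]$, $\mathcal A_k$ the $k$-subsets. Approval profile $P=(A_1,\dots,A_n)$, $A_j\subseteq\mathcal A$, drawn i.i.d. from $\pi_{\vec p}$, where $\Pr_{\pi_{\vec p}}(A)=\prod_{i\in A}p_i\prod_{i\notin A}(1-p_i)$. $\mathrm{top}_k(\vec p)$ is the set of $W\in\mathcal A_k$ with $p_i\ge p_j$ for all $i\in W$, $j\notin W$. $W\in\mathcal A_k$ is in $\mathrm{EJR{+}}(P)$ iff there are no $a\in\mathcal A\setminus W$, integer $\ell\ge1$ and set of voters $N'\subseteq[n]$ with $|N'|\ge\ell n/k$ such that every $j\in N'$ has $a\in A_j$ and $|A_j\cap W|<\ell$. Asymptotics as $n\to\infty$. *)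

From HB Require Import structures.
From mathcomp Require Import all_boot all_order all_algebra.
From mathcomp Require Import boolp reals sequences exp.
Set Implicit Arguments. Unset Strict Implicit. Unset Printing Implicit Defensive.
Import Order.TTheory GRing.Theory Num.Theory.
Local Open Scope ring_scope.

Section Defs.
Variable R : realType.
Variables (m : nat).

Definition pi_p (p : 'I_m -> R) (A : {set 'I_m}) : R :=
  (\prod_(i in A) p i) * (\prod_(i in ~: A) (1 - p i)).

Definition profile (n : nat) := {ffun 'I_n -> {set 'I_m}}.

Definition profile_prob (p : 'I_m -> R) (n : nat) (P : profile n) : R :=
  \prod_(j < n) pi_p p (P j).

Definition top_k (p : 'I_m -> R) (k : nat) (W : {set 'I_m}) : Prop :=
  #|W| = k /\ (forall i j, i \in W -> j \notin W -> p j <= p i).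

Definition EJRplus (k n : nat) (P : profile n) (W : {set 'I_m}) : Prop :=
  #|W| = k /\
  ~ (exists a : 'I_m, a \notin W /\
       exists l : nat, (1 <= l)%N /\
       exists N' : {set 'I_n},
         ((l * n)%:R / k%:R <= #|N'|%:R :> R) /\
         (forall j, j \in N' -> a \in P j /\ (#|P j :&: W| < l)%N)).

Definition prob_top_in_EJR (p : 'I_m -> R) (k n : nat) : R :=
  \sum_(P : profile n | `[< forall W, top_k p k W -> EJRplus k P W >])
     profile_prob p P.

End Defs.

From HB Require Import structures.
From mathcomp Require Import all_boot all_order all_algebra perm.
From mathcomp Require Import boolp reals sequences exp.
From mathcomp Require Import ring lra.
Import Order.TTheory GRing.Theory Num.Theory.
Set Implicit Arguments. Unset Strict Implicit. Unset Printing Implicit Defensive.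
Local Open Scope ring_scope.

(* Fix W in top_k(p), a candidate a outside W and 1 <= l <= k, and call a ballot
   underrepresented when it approves a but fewer than l members of W; EJR+ fails
   for W exactly when, for some such (a, l), at least l n / k ballots are
   underrepresented.  Let q be the probability of an underrepresented ballot and
   S = a |: W.  Transposing a with some i in W preserves |A :&: S| and, as
   p_a <= p_i, does not decrease the probability of a ballot containing a but not
   i; hence Pr(a in A, |A :&: S| <= l) <= Pr(i in A, |A :&: S| <= l).  Summing
   over S bounds (k + 1) q by E[|A :&: S|; |A :&: S| <= l] <= l, so the expected
   number q n of underrepresented ballots is a constant factor below l n / k, and
   an exponential-moment (Chernoff) bound shows that the threshold is reached with
   probability at most r^n for some r < 1.  A union bound over the finitely many
   triples (W, a, l) concludes. *)

Section ApprovalDistribution.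
Variables (R : realType) (m : nat) (p : 'I_m -> R).

Lemma pi_pE A : pi_p p A = \prod_i (if i \in A then p i else 1 - p i).
Proof.
rewrite /pi_p [X in X * _]big_mkcond [X in _ * X]big_mkcond -big_split /=.
by apply: eq_bigr => i _; rewrite inE; case: (i \in A); rewrite ?mulr1 ?mul1r.
Qed.

Lemma sum_profile_prod n (F : {set 'I_m} -> R) :
  \sum_(P : profile m n) \prod_(j < n) F (P j) = (\sum_A F A) ^+ n.
Proof. by rewrite -(bigA_distr_bigA (fun _ : 'I_n => F)) prodr_const card_ord. Qed.

Hypothesis p01 : forall i, 0 <= p i <= 1.

Lemma bit_prob_ge0 i (b : bool) : 0 <= if b then p i else 1 - p i.
Proof. by have /andP[? ?] := p01 i; case: b; rewrite ?subr_ge0. Qed.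

Lemma pi_p_ge0 A : 0 <= pi_p p A.
Proof. by rewrite pi_pE; apply: prodr_ge0 => i _; apply: bit_prob_ge0. Qed.

Lemma sum_pi_p : \sum_A pi_p p A = 1.
Proof.
under eq_bigr do rewrite pi_pE.
by rewrite -bigA_distr big1 // => i _; apply: subrKC.
Qed.

Lemma profile_prob_ge0 n (P : profile m n) : 0 <= profile_prob p P.
Proof. by apply: prodr_ge0 => j _; apply: pi_p_ge0. Qed.

Lemma sum_profile_prob n : \sum_(P : profile m n) profile_prob p P = 1.
Proof. by rewrite sum_profile_prod sum_pi_p expr1n. Qed.

Lemma sum_pi_p_mem_truncated (S : {set 'I_m}) (l : nat) :
  \sum_(j in S) \sum_(A : {set 'I_m} | (j \in A) && (#|A :&: S| <= l)%N) pi_p p A <= l%:R.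
Proof.
rewrite (exchange_big_dep predT) //=.
apply: le_trans (_ : \sum_A pi_p p A * l%:R <= _); last first.
  by rewrite -mulr_suml sum_pi_p // mul1r.
apply: ler_sum => A _; have pA := pi_p_ge0 A.
case: (leqP #|A :&: S| l) => [le_l|_]; last first.
  by rewrite big1 => [|j]; [apply: mulr_ge0 | rewrite !andbF].
under eq_bigl do rewrite andbT -in_setI.
by rewrite sumr_const setIC mulrC mulr_natl; apply: ler_wpMn2l.
Qed.

End ApprovalDistribution.

Lemma card_preimsetI (T : finType) (s : {perm T}) (A S : {set T}) :
  s @^-1: S = S -> #|s @^-1: A :&: S| = #|A :&: S|.
Proof. by move=> sS; rewrite -{1}sS -preimsetI card_preimset //; apply: perm_inj. Qed.

Definition underrepresented m (W : {set 'I_m}) (a : 'I_m) (l : nat) (A : {set 'I_m}) :=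
  (a \in A) && (#|A :&: W| < l)%N.

Definition many_underrepresented m n k (W : {set 'I_m}) (a : 'I_m) (l : nat)
    (P : profile m n) :=
  (l * n <= #|[set j | underrepresented W a l (P j)]| * k)%N.

Lemma underrepresentedE m (W : {set 'I_m}) a l A : a \notin W ->
  underrepresented W a l A = (a \in A) && (#|A :&: (a |: W)| <= l)%N.
Proof.
move=> aW; rewrite /underrepresented; case aA: (a \in A) => //=.
by rewrite setIUr (setIidPr (_ : [set a] \subset A)) ?sub1set // cardsU1 inE aA aW.
Qed.

Section Swap.
Variables (R : realType) (m : nat) (p : 'I_m -> R).
Hypothesis p01 : forall i, 0 <= p i <= 1.
Variables (a i : 'I_m).
Hypothesis ia : i != a.

Definition swap_set (A : {set 'I_m}) : {set 'I_m} := tperm a i @^-1: A.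

Lemma mem_swap_setl A : (a \in swap_set A) = (i \in A).
Proof. by rewrite /swap_set inE tpermL. Qed.

Lemma mem_swap_setr A : (i \in swap_set A) = (a \in A).
Proof. by rewrite /swap_set inE tpermR. Qed.

Lemma swap_setK : involutive swap_set.
Proof. by move=> A; apply/setP => j; rewrite /swap_set !inE tpermK. Qed.

Lemma pi_p_swap (A : {set 'I_m}) : p a <= p i -> a \in A -> i \notin A ->
  pi_p p A <= pi_p p (swap_set A).
Proof.
move=> le_ai aA iA.
have split_ai (B : {set 'I_m}) : pi_p p B = (if a \in B then p a else 1 - p a) *
    ((if i \in B then p i else 1 - p i) *
     \prod_(j | (j != a) && (j != i)) (if j \in B then p j else 1 - p j)).
  by rewrite pi_pE (bigD1 a) //= (bigD1 i).
rewrite !split_ai mem_swap_setl mem_swap_setr aA (negbTE iA) !mulrA.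
under [X in _ <= _ * X]eq_bigr => j /andP[ja ji].
  rewrite /swap_set inE tpermD 1?eq_sym //.
over.
apply: ler_wpM2r; last by nra.
by apply: prodr_ge0 => j _; apply: bit_prob_ge0.
Qed.

Lemma swap_set_id (S : {set 'I_m}) : a \in S -> i \in S -> swap_set S = S.
Proof.
move=> aS iS; apply/setP => x; rewrite /swap_set inE.
by case: tpermP => [->|->|]; rewrite ?aS ?iS.
Qed.

Lemma card_swap_setI (A S : {set 'I_m}) : a \in S -> i \in S ->
  #|swap_set A :&: S| = #|A :&: S|.
Proof. by move=> aS iS; apply: card_preimsetI; apply: swap_set_id. Qed.

Lemma sum_pi_p_mem_le (c : pred {set 'I_m}) : p a <= p i ->
  (forall A, c (swap_set A) = c A) ->
  \sum_(A : {set 'I_m} | (a \in A) && c A) pi_p p A <=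
  \sum_(A : {set 'I_m} | (i \in A) && c A) pi_p p A.
Proof.
move=> le_ai c_swap.
rewrite (bigID (fun A : {set 'I_m} => i \in A)).
rewrite [X in _ <= X](bigID (fun A : {set 'I_m} => a \in A)) /=.
apply: lerD.
  rewrite le_eqVlt; apply/predU1P; left; apply: eq_bigl => A.
  by rewrite andbAC [RHS]andbAC [(i \in A) && _]andbC.
rewrite [X in _ <= X](reindex_inj (inv_inj swap_setK)) /=.
under [X in _ <= X]eq_bigl do rewrite mem_swap_setl mem_swap_setr c_swap.
apply: ler_sum => A /andP[/andP[aA _] iA]; exact: pi_p_swap.
Qed.

End Swap.

Lemma ler_pdivr_nat (R : numFieldType) (a b c : nat) : (0 < b)%N ->
  (a%:R / b%:R <= c%:R :> R) = (a <= c * b)%N.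
Proof. by move=> b0; rewrite ler_pdivrMr ?ltr0n // -natrM ler_nat. Qed.

Section Chernoff.
Variables (R : realType) (m : nat) (p : 'I_m -> R).
Hypothesis p01 : forall i, 0 <= p i <= 1.
Variables (n : nat) (g : pred {set 'I_m}).

Lemma sum_profile_prob_expr_count (z : R) :
  \sum_(P : profile m n) profile_prob p P * z ^+ #|[set j | g (P j)]| =
  (1 + (z - 1) * \sum_(A | g A) pi_p p A) ^+ n.
Proof.
have factor P : profile_prob p P * z ^+ #|[set j | g (P j)]| =
    \prod_(j < n) (pi_p p (P j) * (if g (P j) then z else 1)).
  rewrite big_split -prodr_const big_mkcond /=.
  by congr (_ * _); apply: eq_bigr => j _; rewrite inE.
under eq_bigr do rewrite factor.
rewrite (sum_profile_prod _ (fun A => pi_p p A * (if g A then z else 1))).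
congr (_ ^+ _); rewrite -[X in _ = X + _](sum_pi_p p) mulr_sumr.
rewrite [X in _ = _ + X]big_mkcond -big_split /=.
by apply: eq_bigr => A _; case: (g A); rewrite ?mulr0 ?addr0 ?mulr1 //; ring.
Qed.

Lemma sum_profile_prob_count_ge (k l : nat) (y : R) : 1 <= y ->
  \sum_(P : profile m n | (l * n <= #|[set j | g (P j)]| * k)%N) profile_prob p P
  <= ((1 + (y ^+ k - 1) * \sum_(A | g A) pi_p p A) / y ^+ l) ^+ n.
Proof.
move=> y1; have y0 : 0 < y by apply: lt_le_trans y1.
rewrite expr_div_n -sum_profile_prob_expr_count -exprM mulr_suml big_mkcond.
apply: ler_sum => P _; have PP := profile_prob_ge0 p01 P.
rewrite -mulrA -exprM; case: ifP => [thr | _].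
  rewrite -[X in X <= _]mulr1 ler_wpM2l // ler_pdivlMr ?exprn_gt0 // mul1r.
  by apply: ler_weXn2l => //; rewrite [(k * _)%N]mulnC.
by rewrite mulr_ge0 ?divr_ge0 ?exprn_ge0 // ltW.
Qed.
End Chernoff.

Section Decay.
Variable R : realType.

Lemma expR_mul1B_le1 (x : R) : expR x * (1 - x) <= 1.
Proof.
have := expR_ge1Dx (- x); rewrite expRN => le_x.
by rewrite -[leRHS](mulfV (lt0r_neq0 (expR_gt0 x))) ler_pM2l ?expR_gt0.
Qed.

Lemma exists_chernoff_base (k l : nat) (q : R) : (0 < k)%N -> (0 < l)%N ->
  0 <= q -> k.+1%:R * q <= l%:R ->
  exists2 y : R, 1 <= y & 1 + (y ^+ k - 1) * q < y ^+ l.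
Proof.
move=> k0 l0 q0 qk; set K : R := k%:R; set L : R := l%:R.
have K1 : 1 <= K by rewrite ler1n.
have L1 : 1 <= L by rewrite ler1n.
rewrite -addn1 natrD -/K -/L in qk.
(* y := exp (x / k) with x := 1 / (2 (k + 1)): then y^k - 1 <= x / (1 - x)
   and y^l >= 1 + l x / k, which beats q <= l / (k + 1). *)
set x := (2 * (K + 1))^-1; set e := x / K.
have x2 : x * (2 * (K + 1)) = 1 by rewrite mulVf //; lra.
have eK : e * K = x by rewrite mulfVK //; lra.
have x0 : 0 < x by rewrite invr_gt0; lra.
have e0 : 0 < e by rewrite divr_gt0 //; lra.
exists (expR e); first by rewrite -expR0 ler_expR ltW.
rewrite -!expRM_natr -/K -/L eK.
apply: lt_le_trans (expR_ge1Dx _); rewrite ltrD2l.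
have := expR_mul1B_le1 x; set E := expR x => Ex.
have x1 : x < 1 by nra.
have E_x : (E - 1) * (1 - x) <= x by nra.
have qK : q * K < L * (1 - x) by nra.
have : (E - 1) * q * (1 - x) < e * L * (1 - x).
  have : (E - 1) * (1 - x) * q <= x * q by nra.
  nra.
by rewrite ltr_pM2r ?subr_gt0.
Qed.

(* Only [n > 0] is constrained: for [n = 0] the EJR+ threshold [l n / k] vanishes. *)
Definition geometric_decay (f : nat -> R) :=
  exists C r : R, [/\ 0 <= C, 0 < r < 1 & forall n, (0 < n)%N -> f n <= C * r ^+ n].

Lemma geometric_decay_le (f g : nat -> R) :
  (forall n, (0 < n)%N -> f n <= g n) -> geometric_decay g -> geometric_decay f.
Proof.
move=> fg [C [r [C0 r01 gr]]]; exists C, r; split => // n n0.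
exact: le_trans (fg n n0) (gr n n0).
Qed.

Lemma geometric_decayD (f g : nat -> R) :
  geometric_decay f -> geometric_decay g -> geometric_decay (fun n => f n + g n).
Proof.
move=> [C1 [r1 [C10 /andP[r10 r11] fr]]] [C2 [r2 [C20 /andP[r20 r21] gr]]].
exists (C1 + C2), (Num.max r1 r2); split; first exact: addr_ge0.
  by rewrite lt_max r10 gt_max r11 r21.
move=> n n0; rewrite mulrDl.
have le_rmax r : 0 < r -> r <= Num.max r1 r2 -> r ^+ n <= (Num.max r1 r2) ^+ n.
  by move=> r0 le_r; apply: lerXn2r; rewrite ?nnegrE ?(ltW r0) ?(le_trans (ltW r0)).
apply: lerD.
  by apply: le_trans (fr n n0) (ler_wpM2l C10 (le_rmax _ _ _)); rewrite ?le_max ?lexx.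
by apply: le_trans (gr n n0) (ler_wpM2l C20 (le_rmax _ _ _)); rewrite ?le_max ?lexx ?orbT.
Qed.

Lemma geometric_decay_sum (I : Type) (s : seq I) (P : pred I) (F : I -> nat -> R) :
  (forall i, P i -> geometric_decay (F i)) ->
  geometric_decay (fun n => \sum_(i <- s | P i) F i n).
Proof.
move=> FP; elim: s => [|i s IH].
  exists 0, 2^-1; split => //; first by rewrite invr_gt0 invf_lt1 ?ltr0n ?ltr1n.
  by move=> n _; rewrite big_nil mul0r.
have [Pi|nPi] := boolP (P i).
  by apply: geometric_decay_le (geometric_decayD (FP i Pi) IH) => n _; rewrite big_cons Pi.
by apply: geometric_decay_le IH => n _; rewrite big_cons (negPf nPi).
Qed.

Lemma geometric_decay_expR (f : nat -> R) : geometric_decay f ->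
  exists c : R, 0 < c /\ exists N : nat, forall n, (N <= n)%N -> f n <= expR (- (c * n%:R)).
Proof.
move=> [C [r [C0 /andP[r0 r1] fr]]].
set c := - ln r / 2.
have lnr : ln r < 0 by apply: ln_lt0; rewrite r0 r1.
have c0 : 0 < c by rewrite /c; lra.
have r_expR : r = expR (- (c * 2)) by rewrite /c mulfVK ?opprK ?lnK //; lra.
exists c; split => //; exists (Num.Def.archi_bound (C / c)).+1 => n Nn.
have n0 : (0 < n)%N by apply: leq_trans Nn.
apply: le_trans (fr n n0) _.
have Cn : C <= c * n%:R.
  rewrite mulrC -ler_pdivrMr //; apply: ltW; apply: lt_le_trans (archi_boundP _) _.
    exact: divr_ge0 (ltW c0).
  by rewrite ler_nat ltnW.
have -> : r ^+ n = expR (- (c * n%:R)) * expR (- (c * n%:R)).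
  by rewrite r_expR -expRM_natr -expRD; congr expR; ring.
rewrite mulrA ler_piMl ?expR_ge0 // expRN ler_pdivrMr ?expR_gt0 // mul1r.
by apply: le_trans (expR_ge1Dx _); lra.
Qed.

End Decay.

Lemma union_bound (R : numDomainType) (I T : finType) (w : T -> R) (B : pred T)
    (J : pred I) (E : I -> pred T) :
  (forall t, 0 <= w t) -> (forall t, B t -> exists2 i, J i & E i t) ->
  \sum_(t | B t) w t <= \sum_(i | J i) \sum_(t | E i t) w t.
Proof.
move=> w0 cover; rewrite (exchange_big_dep predT) //= big_mkcond /=.
apply: ler_sum => t _; case: ifP => [/cover[i Ji Eit] | _]; last exact: sumr_ge0.
by rewrite (bigD1 i) ?Ji //= lerDl sumr_ge0.
Qed.

Section Violation.
Variables (R : realType) (m k : nat) (p : 'I_m -> R).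
Hypotheses (k0 : (0 < k)%N) (p01 : forall i, 0 <= p i <= 1).

Lemma sum_pi_p_underrepresented_le (W : {set 'I_m}) (a : 'I_m) (l : nat) : a \notin W ->
  (forall i, i \in W -> p a <= p i) ->
  #|W|.+1%:R * \sum_(A | underrepresented W a l A) pi_p p A <= l%:R.
Proof.
move=> aW le_a; set S := a |: W.
apply: le_trans (sum_pi_p_mem_truncated p01 S l).
under eq_bigl do rewrite underrepresentedE //.
have <- : #|S| = #|W|.+1 by rewrite cardsU1 aW.
rewrite mulr_natl -sumr_const.
apply: ler_sum => j; rewrite in_setU1 => /predU1P[-> // | jW].
have ja : j != a by apply: contraNneq aW => <-.
apply: sum_pi_p_mem_le => // [|A]; first exact: le_a.
by rewrite card_swap_setI // ?setU11 // in_setU1 jW orbT.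
Qed.

Lemma not_EJRplus_witness n (P : profile m n) (W : {set 'I_m}) :
  (0 < n)%N -> #|W| = k -> ~ EJRplus R k P W ->
  exists a (l : 'I_k.+1), [/\ a \notin W, (0 < l)%N & many_underrepresented k W a l P].
Proof.
move=> n0 Wk /not_andP[//|/contrapT[a [aW [l [l0 [N' [+ N'P]]]]]]].
rewrite ler_pdivr_nat // => N'l.
have lk : (l < k.+1)%N.
  move: (leq_trans N'l (leq_mul (max_card N') (leqnn k))).
  by rewrite card_ord mulnC leq_pmul2l.
exists a, (Ordinal lk); split => //; apply: leq_trans N'l _; rewrite leq_mul2r.
apply/orP; right; apply/subset_leq_card/subsetP => j /N'P[aj lj].
by rewrite inE /underrepresented aj.
Qed.

Lemma many_underrepresented_geometric_decay (W : {set 'I_m}) (a : 'I_m) (l : nat) :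
  #|W| = k -> a \notin W -> (forall i, i \in W -> p a <= p i) -> (0 < l)%N ->
  geometric_decay (fun n =>
    \sum_(P : profile m n | many_underrepresented k W a l P) profile_prob p P).
Proof.
move=> Wk aW le_a l0; set q := \sum_(A | underrepresented W a l A) pi_p p A.
have q0 : 0 <= q by apply: sumr_ge0 => A _; apply: pi_p_ge0.
have := sum_pi_p_underrepresented_le l aW le_a; rewrite Wk -/q => qk.
have [y y1 ratio1] := exists_chernoff_base k0 l0 q0 qk.
have yl : 0 < y ^+ l by rewrite exprn_gt0 // (lt_le_trans ltr01).
exists 1, ((1 + (y ^+ k - 1) * q) / y ^+ l); split => //.
  rewrite divr_gt0 ?ltr_pdivrMr // ?mul1r //.
  by rewrite ltr_wpDr // mulr_ge0 // subr_ge0 exprn_ege1.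
by move=> n _; rewrite mul1r (sum_profile_prob_count_ge p01).
Qed.

Lemma one_sub_prob_top_in_EJR n :
  1 - prob_top_in_EJR p k n = \sum_(P : profile m n |
    ~~ `[< forall W, top_k p k W -> EJRplus R k P W >]) profile_prob p P.
Proof.
apply/eqP; rewrite subr_eq -(sum_profile_prob p n) addrC; apply/eqP.
exact: bigID.
Qed.

End Violation.

Theorem theorem17 (R : realType) (m k : nat) (p : 'I_m -> R) :
  (0 < k)%N -> (k < m)%N -> (forall i, 0 < p i < 1) ->
  exists c : R, 0 < c /\
    exists N : nat, forall n : nat, (N <= n)%N ->
      1 - prob_top_in_EJR p k n <= expR (- (c * n%:R)).
Proof.
(* The argument does not need [k < m]. *)
move=> k0 _ p_gt0_lt1.
have p01 i : 0 <= p i <= 1 by have /andP[? ?] := p_gt0_lt1 i; rewrite !ltW.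
pose valid (x : {set 'I_m} * 'I_m * 'I_k.+1) :=
  [&& `[< top_k p k x.1.1 >], x.1.2 \notin x.1.1 & (0 < x.2)%N].
apply: geometric_decay_expR.
apply: (geometric_decay_le (g := fun n => \sum_(x | valid x)
  \sum_(P : profile m n | many_underrepresented k x.1.1 x.1.2 x.2 P) profile_prob p P)).
  move=> n n0; rewrite one_sub_prob_top_in_EJR.
  apply: union_bound => P; first exact: profile_prob_ge0.
  move=> /asboolPn/existsNP[W /not_implyP[Wtop /(not_EJRplus_witness k0 n0 Wtop.1)]].
  by move=> [a [l [aW l0 many]]]; exists (W, a, l); rewrite //= /valid (asboolT Wtop) aW.
apply: geometric_decay_sum => -[[W a] l] /and3P[/asboolP[Wk Wtop] aW l0].
by apply: many_underrepresented_geometric_decay => // i iW; apply: Wtop.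
Qed.
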